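(* Let $\mathbb{X}$ be a two-dimensional real Banach space, let $z\in\mathbb{X}$ with $z\neq 0$, and let $\epsilon\in[0,1)$. Then $\overline{B}(z,\epsilon)\cap S_{\mathbb{X}}$ is either empty or path connected.
   Context: $\overline{B}(z,\epsilon)=\{w\in\mathbb{X}:\|w-z\|\leq\epsilon\}$ and $S_{\mathbb{X}}$ is the unit sphere of $\mathbb{X}$. *)

From HB Require Import structures.
From mathcomp Require Import all_boot all_order all_algebra.
From mathcomp Require Import all_classical all_reals all_analysis.
Set Implicit Arguments. Unset Strict Implicit. Unset Printing Implicit Defensive.
Import Order.TTheory GRing.Theory Num.Theory.
Import numFieldNormedType.Exports.
Local Open Scope classical_set_scope.
Local Open Scope ring_scope.

Definition two_dimensional (R : realType) (X : normedModType R) : Prop :=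
  exists e1 e2 : X,
    (forall a b : R, a *: e1 + b *: e2 = 0 -> a = 0 /\ b = 0) /\
    (forall x : X, exists a b : R, x = a *: e1 + b *: e2).

Definition cball (R : realType) (X : normedModType R) (z : X) (eps : R) : set X :=
  [set w | `|w - z| <= eps].

Definition usphere (R : realType) (X : normedModType R) : set X :=
  [set w | `|w| = 1].

Definition path_connected (R : realType) (X : normedModType R) (A : set X) : Prop :=
  forall x y, A x -> A y ->
    exists f : R -> X,
      {within `[0, 1]%classic, continuous f} /\
      f 0 = x /\ f 1 = y /\ f @` `[0, 1]%classic `<=` A.

From HB Require Import structures.
From mathcomp Require Import all_boot all_order all_algebra.
From mathcomp Require Import all_classical all_reals all_analysis.
From mathcomp Require Import ring lra.
Import Order.TTheory GRing.Theory Num.Theory.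
Import numFieldNormedType.Exports.
Local Open Scope classical_set_scope.
Local Open Scope ring_scope.

(* Two points x, y of the intersection are joined by the radial projection
   t |-> p_t / |p_t| of the segment p_t = (1 - t) x + t y onto the sphere;
   p_t never vanishes because x and y cannot be antipodal when both lie within
   eps < 1 of z.  In dimension two either y = x or z = a x + b y, and then each
   point q of the arc lies in the cone spanned (with nonnegative coefficients)
   by z and one of x, y; on the unit sphere, moving from x towards z inside
   that cone does not increase the distance to z, so |q - z| <= eps. *)

(* Rewrites both sides of an equation between linear combinations of x and y
   to the form C a b = a *: x + b *: y, leaving the equations between the
   coefficients. *)
Ltac lincomb2 x y :=
  let C := fresh "C" in
  pose C := fun a b => a *: x + b *: y;
  assert (combD : forall a b a' b', C a b + C a' b' = C (a + a') (b + b'))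
    by (move=> *; rewrite /C addrACA -!scalerDl //);
  assert (combN : forall a b, - C a b = C (- a) (- b))
    by (move=> *; rewrite /C opprD -!scaleNr //);
  assert (combZ : forall k a b, k *: C a b = C (k * a) (k * b))
    by (move=> *; rewrite /C scalerDr !scalerA //);
  assert (comb10 : x = C 1 0)
    by (rewrite /C scale1r scale0r addr0 //);
  assert (comb01 : y = C 0 1)
    by (rewrite /C scale1r scale0r add0r //);
  rewrite ?[in LHS]comb10 ?[in LHS]comb01 ?[in RHS]comb10 ?[in RHS]comb01;
  rewrite ?(combZ, combN, combD); clear combD combN combZ comb10 comb01;
  congr (C _ _).

Section UnitSphere.
Context {R : realFieldType} {X : normedModType R}.
Implicit Types (x y z q v : X) (a b g d e t l : R).

Lemma sphere_cone_dist_le_far {x z q g d} :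
  `|x| = 1 -> `|q| = 1 -> 0 <= g -> 0 <= d -> 1 <= g + d ->
  q = g *: x + d *: z -> `|q - z| <= `|x - z|.
Proof.
move=> x1 q1 g0 d0 gd1 qE.
pose m := (g + d)^-1.
have m0 : 0 < m by rewrite invr_gt0; lra.
have m1 : m <= 1 by rewrite invf_le1 //; lra.
have mgd : m * g + m * d = 1 by rewrite -mulrDr mulVf //; lra.
(* m *: q lies on the segment [x, z]. *)
have mqz : m *: q - z = (m * g) *: (x - z) by rewrite qE; lincomb2 x z; lra.
have xmq : x - m *: q = (1 - m * g) *: (x - z) by rewrite qE; lincomb2 x z; lra.
have qz : `|q - z| <= (1 - m) + m * g * `|x - z|.
  have -> : q - z = (1 - m) *: q + (m *: q - z).
    by rewrite scalerBl scale1r addrA subrK.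
  rewrite mqz.
  by rewrite (le_trans (ler_normD _ _)) // !normrZ q1 mulr1 !ger0_norm //; nra.
have x_le : 1 <= (1 - m * g) * `|x - z| + m.
  rewrite -{1}x1 -{1}[x](subrK (m *: q)) xmq (le_trans (ler_normD _ _)) //.
  by rewrite !normrZ q1 mulr1 !ger0_norm //; nra.
nra.
Qed.

Lemma sphere_cone_dist_le_near {x z q g d} :
  `|x| = 1 -> `|q| = 1 -> 0 <= g -> 0 <= d -> g + d <= 1 ->
  q = g *: x + d *: z -> `|q - z| <= `|x - z|.
Proof.
move=> x1 q1 g0 d0 gd1 qE.
have z_le : `|z| <= `|x - z| + 1.
  by have := ler_normB x (x - z); rewrite opprB addrC subrK x1 addrC.
have qz : `|q - z| <= g * `|x - z| + (1 - g - d) * `|z|.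
  have -> : q - z = g *: (x - z) + (g + d - 1) *: z by rewrite qE; lincomb2 x z; lra.
  rewrite (le_trans (ler_normD _ _)) // !normrZ (ger0_norm g0).
  by rewrite (ler0_norm (_ : g + d - 1 <= 0)); [lra|lra].
have q_le : 1 <= g + d * `|z|.
  by rewrite -q1 qE (le_trans (ler_normD _ _)) // !normrZ x1 mulr1 !ger0_norm.
nra.
Qed.

Lemma sphere_cone_dist_le {x z q g d} :
  `|x| = 1 -> `|q| = 1 -> 0 <= g -> 0 <= d ->
  q = g *: x + d *: z -> `|q - z| <= `|x - z|.
Proof.
move=> x1 q1 g0 d0; have [/ltW|] := ltP (g + d) 1.
- exact: sphere_cone_dist_le_near.
- exact: sphere_cone_dist_le_far.
Qed.

Lemma sphere_cone2_dist_le {x y z q a b g d} :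
  `|x| = 1 -> `|q| = 1 -> 0 < b -> 0 <= d -> a * d <= g * b ->
  q = g *: x + d *: y -> z = a *: x + b *: y -> `|q - z| <= `|x - z|.
Proof.
move=> x1 q1 b0 d0 adgb qE zE.
apply: (@sphere_cone_dist_le x z q (g - a * d / b) (d / b)) => //.
- by rewrite subr_ge0 ler_pdivrMr.
- exact: divr_ge0 (ltW b0).
- by rewrite qE zE; lincomb2 x y; field; lra.
Qed.

Lemma cball_sphere_neg_coef {x y z a b e} :
  `|x| = 1 -> a + b <= 1 -> b <= 0 -> z = a *: x + b *: y ->
  `|x - z| <= e -> `|y - z| <= e -> 1 - a - b <= (1 - b *+ 2) * e.
Proof.
move=> x1 ab1 b0 zE xz yz.
have xE : (1 - a - b) *: x = (1 - b) *: (x - z) + b *: (y - z).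
  by rewrite zE; lincomb2 x y; ring.
have := ler_normD ((1 - b) *: (x - z)) (b *: (y - z)).
rewrite -xE !normrZ x1 mulr1 (ler0_norm b0) !ger0_norm; [nra|lra|lra].
Qed.

Lemma sphere_cone_cball {x y z q a b g d e} :
  `|x| = 1 -> `|y| = 1 -> `|q| = 1 -> `|x - z| <= e -> `|y - z| <= e -> e < 1 ->
  0 <= g -> 0 <= d -> q = g *: x + d *: y -> z = a *: x + b *: y ->
  `|q - z| <= e.
Proof.
move=> x1 y1 q1 xz yz e1 g0 d0 qE zE.
(* z = a x + b y with b > 0 puts q in the cone spanned by x and z iff a d <= g b. *)
have cone_x : 0 < b -> a * d <= g * b -> `|q - z| <= e.
  by move=> b0 adgb; apply: le_trans _ xz; apply: sphere_cone2_dist_le qE zE.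
have cone_y : 0 < a -> b * g <= d * a -> `|q - z| <= e.
  move=> a0 bgda; rewrite addrC in qE; rewrite addrC in zE.
  by apply: le_trans _ yz; apply: sphere_cone2_dist_le qE zE.
have [a0|a0] := ltP 0 a; have [b0|b0] := ltP 0 b.
- by have [|] := lerP (a * d) (g * b) => h; [apply: cone_x | apply: cone_y]; nra.
- by apply: cone_y => //; nra.
- by apply: cone_x => //; nra.
have ab1 : a + b <= 1 by lra.
have ex := cball_sphere_neg_coef x1 ab1 b0 zE xz yz.
rewrite addrC in ab1; rewrite addrC in zE.
have ey := cball_sphere_neg_coef y1 ab1 a0 zE yz xz.
nra.
Qed.

Lemma cball_sphere_neq_opp {x y z e} :
  `|x| = 1 -> `|x - z| <= e -> `|y - z| <= e -> e < 1 -> y != - x.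
Proof.
move=> x1 xz yz e1; apply/eqP => yE; move: yz; rewrite yE => xz'.
have := ler_normB (x - z) (- x - z).
rewrite opprB addrA subrK opprK -mulr2n -scaler_nat normrZ x1 mulr1.
by rewrite ger0_norm ?ler0n //; lra.
Qed.

Lemma sphere_collinear {x y l} : `|x| = 1 -> `|y| = 1 -> y = l *: x -> y = x \/ y = - x.
Proof.
move=> x1 y1 yE; have l1 : `|l| = 1 by rewrite -y1 yE normrZ x1 mulr1.
have [l0|l0] := lerP 0 l.
- by left; rewrite yE -[l](ger0_norm l0) l1 scale1r.
- by right; rewrite yE -[l]opprK -[- l](ltr0_norm l0) l1 scaleN1r.
Qed.

Lemma sphere_segment_neq0 x y t :
  `|x| = 1 -> `|y| = 1 -> y != - x -> (1 - t) *: x + t *: y != 0.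
Proof.
move=> x1 y1; apply: contraNneq => /eqP; rewrite addr_eq0 => /eqP txE.
have := congr1 Num.norm txE; rewrite normrN !normrZ x1 y1 !mulr1 => /eqP.
rewrite eqr_norm2 => /orP[/eqP tt|]; last by rewrite subr_eq addNr oner_eq0.
have t0 : t != 0 by apply: contra_eq_neq tt => ->; rewrite subr0 oner_neq0.
by apply/eqP/(scalerI t0); rewrite scalerN -{2}tt txE opprK.
Qed.

Definition normalize (v : X) : X := `|v|^-1 *: v.

Lemma norm_normalize v : v != 0 -> `|normalize v| = 1.
Proof. by move=> v0; rewrite normrZ normfV normr_id mulVf ?normr_eq0. Qed.

Lemma normalize_id v : `|v| = 1 -> normalize v = v.
Proof. by move=> v1; rewrite /normalize v1 invr1 scale1r. Qed.

Lemma normalize_continuous v : v != 0 -> {for v, continuous normalize}.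
Proof.
move=> v0; apply: cvgZ; last exact: cvg_id.
by apply: cvgV; [rewrite normr_eq0 | exact: cvg_norm].
Qed.

Definition sphere_arc x y t : X := normalize ((1 - t) *: x + t *: y).

Lemma sphere_arc0 x y : `|x| = 1 -> sphere_arc x y 0 = x.
Proof. by move=> x1; rewrite /sphere_arc subr0 scale1r scale0r addr0 normalize_id. Qed.

Lemma sphere_arc1 x y : `|y| = 1 -> sphere_arc x y 1 = y.
Proof. by move=> y1; rewrite /sphere_arc subrr scale0r scale1r add0r normalize_id. Qed.

Lemma sphere_arcxx x t : `|x| = 1 -> sphere_arc x x t = x.
Proof. by move=> x1; rewrite /sphere_arc -scalerDl subrK scale1r normalize_id. Qed.

Lemma norm_sphere_arc x y t :
  `|x| = 1 -> `|y| = 1 -> y != - x -> `|sphere_arc x y t| = 1.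
Proof. by move=> x1 y1 yx; rewrite norm_normalize ?sphere_segment_neq0. Qed.

Lemma sphere_arc_continuous x y :
  `|x| = 1 -> `|y| = 1 -> y != - x -> continuous (sphere_arc x y).
Proof.
move=> x1 y1 yx t.
have -> : sphere_arc x y = normalize \o (fun s => (1 - s) *: x + s *: y) by [].
apply: continuous_comp.
  apply: cvgD; apply: cvgZ; try exact: cvg_cst; try exact: cvg_id.
  by apply: cvgB; [exact: cvg_cst | exact: cvg_id].
by apply: normalize_continuous; apply: sphere_segment_neq0.
Qed.

Lemma sphere_arc_cball {x y z a b e t} :
  `|x| = 1 -> `|y| = 1 -> `|x - z| <= e -> `|y - z| <= e -> e < 1 ->
  z = a *: x + b *: y -> t \in `[0, 1] -> `|sphere_arc x y t - z| <= e.
Proof.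
move=> x1 y1 xz yz e1 zE; rewrite in_itv /= => /andP[t0 t1].
have yx := cball_sphere_neq_opp x1 xz yz e1.
pose n := `|(1 - t) *: x + t *: y|.
apply: (@sphere_cone_cball x y z _ a b ((1 - t) / n) (t / n)) => //.
- by apply: norm_sphere_arc.
- by rewrite divr_ge0 ?subr_ge0 // normr_ge0.
- by rewrite divr_ge0 // normr_ge0.
- by rewrite /sphere_arc /normalize scalerDr !scalerA !(mulrC n^-1).
Qed.
End UnitSphere.

Lemma two_dimensional_collinear_or_span {R : realType} {X : normedModType R} (x y : X) :
  two_dimensional X -> x != 0 ->
  (exists l : R, y = l *: x) \/ (forall z : X, exists a b : R, z = a *: x + b *: y).
Proof.
move=> [e1 [e2 [_ span]]] x0.
have [x1 [x2 xE]] := span x; have [y1 [y2 yE]] := span y.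
have [det0|det0] := eqVneq (x1 * y2 - x2 * y1) 0; [left | right].
  have collinear c d : c != 0 -> c *: y = d *: x -> exists l, y = l *: x.
    by move=> c0 cyE; exists (c^-1 * d); rewrite -scalerA -cyE scalerK.
  have [x10|x10] := eqVneq x1 0; last first.
    by apply: (collinear x1 y1 x10); rewrite xE yE; lincomb2 e1 e2; nra.
  have x20 : x2 != 0.
    by apply: contraNneq x0 => x20; rewrite xE x10 x20 !scale0r addr0.
  by apply: (collinear x2 y2 x20); rewrite xE yE; lincomb2 e1 e2; nra.
move=> z; have [z1 [z2 zE]] := span z.
exists ((z1 * y2 - z2 * y1) / (x1 * y2 - x2 * y1)).
exists ((x1 * z2 - x2 * z1) / (x1 * y2 - x2 * y1)).
by rewrite zE xE yE; lincomb2 e1 e2; field.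
Qed.

Theorem lemma2p1 (R : realType) (X : completeNormedModType R)
  (hX : two_dimensional X) (z : X) (hz : z != 0) (eps : R)
  (heps0 : 0 <= eps) (heps1 : eps < 1) :
  cball z eps `&` @usphere R X = set0 \/ path_connected (cball z eps `&` @usphere R X).
Proof.
right => x y [xz x1] [yz y1]; rewrite /cball /usphere /= in xz x1 yz y1.
have yx := cball_sphere_neq_opp x1 xz yz heps1.
exists (sphere_arc x y); split.
  exact/continuous_subspaceT/sphere_arc_continuous.
split; first exact: sphere_arc0.
split; first exact: sphere_arc1.
move=> _ [t t01 <-]; split; last exact: norm_sphere_arc.
have x0 : x != 0 by rewrite -normr_gt0 x1.
have [[l yE]|span] := two_dimensional_collinear_or_span x y hX x0.
  have [xy|] := sphere_collinear x1 y1 yE; last by move/eqP: yx.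
  by rewrite /cball /= xy sphere_arcxx.
have [a [b zE]] := span z.
exact: sphere_arc_cball x1 y1 xz yz heps1 zE t01.
Qed.
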